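(* Assume the setting below and define $$\alpha_{GB+ST}(t)=\max_{0\le j\le N-1}\ \sum_{k=j}^{j+N-1}(L_k+L^G_k)\,C\left\lceil\frac{t-o_{k,j}+L^G_k-L^G_j}{p}\right\rceil,\qquad t\ge0.$$ Then for all $s\in\mathbb R$ and $t\ge0$, $C$ times the Lebesgue measure of $(G\cup S)\cap[s,s+t]$ is at most $\alpha_{GB+ST}(t)$; i.e. $\alpha_{GB+ST}$ is an arrival curve of the credit-frozen part due to ST windows and guard bands.
   Context: Fix an output port with physical link rate $C>0$. Its gate control list (GCL) is periodic with period $p>0$ and contains $N\ge 1$ scheduled-traffic (ST) windows per period. Window $k\in\{0,\dots,N-1\}$ is the interval $[o_k,o_k+L_k)$, where $0\le o_0<o_1<\dots<o_{N-1}<p$, $L_k\ge 0$, $o_k+L_k\le o_{k+1}$ for $k<N-1$ and $o_{N-1}+L_{N-1}\le o_0+p$. Indices are extended to all integers periodically: $o_{k+N}=o_k+p$, $L_{k+N}=L_k$. Relative offsets are $o_{j,i}=o_j-o_i$. Let $S=\bigcup_{k\in\mathbb Z}[o_k,o_k+L_k)$. Guard bands: for each $k$, $L^G_k=\min\{\ell/C,\ o_k-(o_{k-1}+L_{k-1})\}$, where $\ell>0$ is the maximal frame size of the AVB flows of classes $M_1,\dots,M_i$ competing at the port; thus $L^G_{k+N}=L^G_k$ and the guard band of window $k$ is $[o_k-L^G_k,o_k)$. Let $G=\bigcup_{k\in\mathbb Z}[o_k-L^G_k,o_k)$. *)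

From HB Require Import structures.
From mathcomp Require Import all_boot all_order all_algebra.
From mathcomp Require Import all_classical all_reals all_analysis.
Set Implicit Arguments. Unset Strict Implicit. Unset Printing Implicit Defensive.
Import Order.TTheory GRing.Theory Num.Theory.
Local Open Scope ring_scope.
Local Open Scope classical_set_scope.

Section GCL.
Variables (R : realType) (N : nat) (p : R) (o L : nat -> R).

(* periodic extension to all integer indices: o_{k+N} = o_k + p, L_{k+N} = L_k *)
Definition oZ (k : int) : R :=
  o `|(k %% (N:int))%Z|%N + ((k %/ (N:int))%Z)%:~R * p.
Definition LZ (k : int) : R := L `|(k %% (N:int))%Z|%N.

Definition orel (k j : int) : R := oZ k - oZ j.

Definition LG (ell C : R) (k : int) : R :=
  Num.min (ell / C) (oZ k - (oZ (k - 1) + LZ (k - 1))).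

Definition STset : set R := [set x | exists k : int, oZ k <= x < oZ k + LZ k].
Definition GBset (ell C : R) : set R :=
  [set x | exists k : int, oZ k - LG ell C k <= x < oZ k].

Definition alpha_term (ell C t : R) (j : nat) : R :=
  \sum_(k <- iota j N)
    (LZ k + LG ell C k) * C *
      (Num.ceil ((t - orel k j + LG ell C k - LG ell C j) / p))%:~R.

(* alpha_{GB+ST}(t) = max over 0 <= j <= N-1 (N >= 1, seed with j = 0) *)
Definition alpha_GBST (ell C t : R) : R :=
  \big[Num.max/alpha_term ell C t 0]_(j < N) alpha_term ell C t j.

End GCL.

From HB Require Import structures.
From mathcomp Require Import all_boot all_order all_algebra.
From mathcomp Require Import all_classical all_reals all_analysis.
From mathcomp Require Import lra zify.
Import Order.TTheory GRing.Theory Num.Theory.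

(* Each ST window k together with its guard band forms a "frozen block"
   [a_k, e_k) = [o_k - L^G_k, o_k + L_k) of length L_k + L^G_k, and G u S is the
   union of these blocks over all integer indices.  The blocks are ordered,
   e_k <= a_(k+1), and shifting an index by N shifts the blocks by p.

   Given a window [s, s + t], pick i with e_(i-1) <= s <= e_i.  Sliding
   the window to start at a_i does not decrease the frozen measure it sees
   (it moves either over a frozen-free gap or over a frozen stretch).  The
   window [a_i, a_i + t] meets block i + n in at most L + L^G, and only when
   a_(i+n) - a_i < t; grouping the blocks i + r + q N by the residue r, the
   number of such q is at most ceil ((t - (a_(i+r) - a_i)) / p), which is the
   j-th term of alpha_GBST for j = i mod N. *)

Set Implicit Arguments. Unset Strict Implicit. Unset Printing Implicit Defensive.
Local Open Scope ring_scope.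
Local Open Scope classical_set_scope.

Section LebesgueIntervals.
Variable R : realType.
Implicit Types a b c s t : R.

Lemma measurable_itv_co a b : measurable [set x : R | a <= x < b].
Proof. by rewrite -set_itvco; exact: measurable_itv. Qed.

Lemma measurable_itv_cc a b : measurable [set x : R | a <= x <= b].
Proof. by rewrite -set_itvcc; exact: measurable_itv. Qed.

Lemma measurable_itv_oc a b : measurable [set x : R | a < x <= b].
Proof. by rewrite -set_itvoc; exact: measurable_itv. Qed.

Lemma lebesgue_itv_co a b : a <= b ->
  lebesgue_measure [set x : R | a <= x < b] = (b - a)%:E.
Proof.
move=> ab; rewrite -set_itvco lebesgue_measure_itv /= lte_fin.
case: ltP => [_|ba]; first by rewrite EFinB.
have -> : b = a by apply/eqP; rewrite eq_le ab ba.
by rewrite subrr.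
Qed.

Lemma lebesgue_itv_oc a b : a <= b ->
  lebesgue_measure [set x : R | a < x <= b] = (b - a)%:E.
Proof.
move=> ab; rewrite -set_itvoc lebesgue_measure_itv /= lte_fin.
case: ltP => [_|ba]; first by rewrite EFinB.
have -> : b = a by apply/eqP; rewrite eq_le ab ba.
by rewrite subrr.
Qed.

Lemma lebesgue_itv_cc_degenerate a b : b <= a ->
  lebesgue_measure [set x : R | a <= x <= b] = 0%E.
Proof.
move=> ba; rewrite -set_itvcc lebesgue_measure_itv /= lte_fin.
by rewrite ltNge ba.
Qed.

(* Sliding a window of length t to the left over a stretch [c, s) that lies
   entirely inside U can only increase the measure of U seen in the window:
   what is lost on the right is at most s - c, what is gained is exactly s - c. *)
Lemma window_slide_covered (U : set R) c s t : measurable U -> 0 <= t ->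
  c <= s -> [set x | c <= x < s] `<=` U ->
  (lebesgue_measure (U `&` [set x | (s <= x <= s + t)%R])
   <= lebesgue_measure (U `&` [set x | (c <= x <= c + t)%R]))%E.
Proof.
move=> mU t_ge0 cs cU.
set W := U `&` _; set D := [set x : R | (c <= x < s)%R].
set V := U `&` [set x : R | (c <= x <= c + t)%R].
set E := [set x : R | (c + t < x <= s + t)%R].
have mW : measurable W by apply: measurableI => //; exact: measurable_itv_cc.
have mV : measurable V by apply: measurableI => //; exact: measurable_itv_cc.
have WD0 : W `&` D = set0.
  by apply/seteqP; split => x // -[[_ /andP[sx _]] /andP[_ xs]]; lra.
have WDsub : W `|` D `<=` V `|` E.
  move=> x [[Ux /andP[sx xt]]|/[dup] /cU Ux /andP[cx xs]];
    have [xct|xct] := leP x (c + t).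
  - by left; split => //; apply/andP; lra.
  - by right; apply/andP; lra.
  - by left; split => //; apply/andP; lra.
  - by right; apply/andP; lra.
have muD : lebesgue_measure D = (s - c)%:E by exact: lebesgue_itv_co.
have muE : lebesgue_measure E = (s - c)%:E.
  by rewrite lebesgue_itv_oc; [congr (_%:E); lra | lra].
rewrite -(leeD2rE _ _ (x := (s - c)%:E)) //.
rewrite -[X in (_ + X <= _)%E]muD -[X in (_ <= _ + X)%E]muE.
rewrite -measureU //; last exact: measurable_itv_co.
have mE : measurable E by exact: measurable_itv_oc.
apply: (le_trans _ (measureU2 (@lebesgue_measure R) mV mE)).
apply: le_measure => //; rewrite inE; last exact: measurableU.
by apply: measurableU => //; exact: measurable_itv_co.
Qed.

End LebesgueIntervals.

Section PeriodicCount.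
Variables (R : realType) (N : nat) (p : R).
Hypothesis p_gt0 : 0 < p.

(* A point x of weight l and its first repetition: if x < t, the ceiling
   counts it at least once; in any case the ceiling is nonnegative, because
   x < p and 0 <= t. *)
Lemma ceil_count_term (l x t : R) : 0 <= l -> (0 < l -> x < p) -> 0 <= t ->
  (if x < t then l else 0) <= l * (Num.ceil ((t - x) / p))%:~R.
Proof.
move=> l_ge0 x_lt_p t_ge0.
have [->|l_neq0] := eqVneq l 0; first by rewrite mul0r; case: ifP.
have l_gt0 : 0 < l by rewrite lt_def l_neq0.
have := x_lt_p l_gt0 => {}x_lt_p.
case: ifP => [xt|_].
  by rewrite ler_peMr // ler1z -gtz0_ge1 ceil_gt0 divr_gt0 // subr_gt0.
by rewrite mulr_ge0 // ler0z ceil_ge0 ltr_pdivlMr //; lra.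
Qed.

Variables (x l : nat -> R).
Hypotheses (x_ge0 : forall n, 0 <= x n) (x_shift : forall n, x (N + n)%N = x n + p)
  (l_shift : forall n, l (N + n)%N = l n) (l_ge0 : forall n, 0 <= l n)
  (x_lt_p : forall n, (n < N)%N -> 0 < l n -> x n < p).

Lemma periodic_count_bound Q t : 0 <= t ->
  \sum_(n <- iota 0 (Q * N)) (if x n < t then l n else 0)
  <= \sum_(r <- iota 0 N) l r * (Num.ceil ((t - x r) / p))%:~R.
Proof.
elim: Q t => [|Q IH] t t_ge0.
  rewrite mul0n big_nil big_seq sumr_ge0 // => r; rewrite mem_iota => /andP[_ rN].
  apply: (le_trans _ (ceil_count_term (l_ge0 r) (x_lt_p rN) t_ge0)).
  by case: ifP.
rewrite mulSn iotaD big_cat /=.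
have -> : iota N (Q * N) = map (addn N) (iota 0 (Q * N)) by rewrite -iotaDl addn0.
rewrite big_map [X in _ + X <= _](eq_bigr (fun n => if x n < t - p then l n else 0));
  last by move=> n _; rewrite x_shift l_shift ltrBrDr.
have [pt|tp] := leP p t.
  apply: le_trans (lerD (lexx _) (IH (t - p) _)) _; first lra.
  rewrite -big_split /= !big_seq ler_sum // => r; rewrite mem_iota => /andP[_ rN].
  have -> : (t - p - x r) / p = (t - x r) / p - 1.
    by rewrite [t - p - x r]addrAC mulrBl divff // gt_eqF.
  rewrite ceilDrz ?rpredN ?rpred1 // ceilN ?rpred1 // ceil1 intrD mulrDr mulrN1.
  by have := l_ge0 r; case: ifP => _; lra.
rewrite [X in _ + X]big1 ?addr0 => [|n _]; last by case: ifP => // xn; have := x_ge0 n; lra.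
rewrite !big_seq ler_sum // => r; rewrite mem_iota => /andP[_ rN].
exact: ceil_count_term (l_ge0 r) (x_lt_p rN) t_ge0.
Qed.

End PeriodicCount.

Section PeriodicBracket.
Variables (R : realType) (N : nat) (p : R) (f : int -> R).
Hypotheses (p_gt0 : 0 < p)
  (f_shift : forall k m : int, f (k + m * N%:Z) = f k + m%:~R * p).

Lemma periodic_exceeds k c : exists Q : nat, c < f (k + (Q * N)%N%:Z).
Proof.
exists (Num.trunc ((c - f k) / p)).+1; rewrite PoszM f_shift -ltrBlDl.
by rewrite -ltr_pdivrMr // truncnS_gt.
Qed.

Lemma periodic_bracket s : exists i, f (i - 1) <= s < f i.
Proof.
set k0 := Num.floor ((s - f 0) / p) * N%:Z.
have fk0_le : f k0 <= s.
  have := f_shift 0 (Num.floor ((s - f 0) / p)); rewrite add0r => ->.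
  by rewrite -lerBrDl -ler_pdivlMr // floor_le.
have [Q QP] := periodic_exceeds k0 s.
have exP : exists n : nat, s < f (k0 + n%:Z) by exists (Q * N)%N.
case: (ex_minnP exP) => n s_lt min_n.
have n_gt0 : (0 < n)%N.
  by rewrite lt0n; apply: contraTneq s_lt => ->; rewrite addr0 -leNgt.
exists (k0 + n%:Z); rewrite s_lt andbT.
have -> : k0 + n%:Z - 1 = k0 + n.-1%:Z by rewrite -{1}(prednK n_gt0); lia.
rewrite leNgt; apply/negP => /min_n.
by rewrite -ltnS prednK // ltnn.
Qed.

End PeriodicBracket.

Section PeriodicExtension.
Variables (R : realType) (N : nat) (p : R) (o L : nat -> R).
Hypothesis N_gt0 : (0 < N)%N.
Hypotheses (L_ge0 : forall k : nat, (k < N)%N -> 0 <= L k)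
  (inner_gap : forall k : nat, (k.+1 < N)%N -> o k + L k <= o k.+1)
  (wrap_gap : o N.-1 + L N.-1 <= o 0%N + p).

Lemma int_divmod (k : int) :
  exists q : int, exists2 r : nat, (r < N)%N & k = q * N%:Z + r%:Z.
Proof.
have N_neq0 : N%:Z != 0 by rewrite eqz_nat -lt0n.
have mod_ge0 : 0 <= (k %% N)%Z by exact: modz_ge0.
exists (k %/ N)%Z, `|(k %% N)%Z|%N; last by rewrite gez0_abs // -divz_eq.
by rewrite -ltz_nat gez0_abs // ltz_pmod // ltz_nat.
Qed.

Lemma divmodz_index (q : int) (r : nat) : (r < N)%N ->
  ((q * N%:Z + r%:Z) %% N%:Z)%Z = r%:Z /\ ((q * N%:Z + r%:Z) %/ N%:Z)%Z = q.
Proof.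
move=> rN; have N_neq0 : N%:Z != 0 by rewrite eqz_nat -lt0n.
rewrite modzMDl divzMDl // modz_small ?divz_small ?addr0 //;
  by rewrite ltz_nat rN andbT.
Qed.

Lemma oZ_divmod (q : int) (r : nat) : (r < N)%N ->
  oZ N p o (q * N%:Z + r%:Z) = o r + q%:~R * p.
Proof. by move=> rN; rewrite /oZ; have [-> ->] := divmodz_index q rN. Qed.

Lemma LZ_divmod (q : int) (r : nat) : (r < N)%N ->
  LZ N L (q * N%:Z + r%:Z) = L r.
Proof. by move=> rN; rewrite /LZ; have [-> _] := divmodz_index q rN. Qed.

Lemma oZ_shift k m : oZ N p o (k + m * N%:Z) = oZ N p o k + m%:~R * p.
Proof.
have [q [r rN ->]] := int_divmod k.
rewrite addrAC -mulrDl !oZ_divmod // intrD mulrDl; lra.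
Qed.

Lemma LZ_shift k m : LZ N L (k + m * N%:Z) = LZ N L k.
Proof. by have [q [r rN ->]] := int_divmod k; rewrite addrAC -mulrDl !LZ_divmod. Qed.

Lemma LG_shift ell C k m : LG N p o L ell C (k + m * N%:Z) = LG N p o L ell C k.
Proof.
rewrite /LG; have -> : k + m * N%:Z - 1 = k - 1 + m * N%:Z by rewrite addrAC.
by rewrite !oZ_shift LZ_shift; congr (Num.min _ _); lra.
Qed.

Lemma LZ_ge0 k : 0 <= LZ N L k.
Proof. by have [q [r rN ->]] := int_divmod k; rewrite LZ_divmod ?L_ge0. Qed.

Lemma window_gap k : oZ N p o k + LZ N L k <= oZ N p o (k + 1).
Proof.
have [q [r rN ->]] := int_divmod k.
rewrite oZ_divmod // LZ_divmod //.
have [r1N|] := ltnP r.+1 N.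
  have -> : q * N%:Z + r%:Z + 1 = q * N%:Z + r.+1%:Z by lia.
  by rewrite oZ_divmod //; have := inner_gap r1N; lra.
move=> Nr1; have Er : r = N.-1 by lia.
have -> : q * N%:Z + r%:Z + 1 = (q + 1) * N%:Z + 0%N%:Z by rewrite Er; lia.
rewrite oZ_divmod // intrD mulrDl mul1r Er; have := wrap_gap; lra.
Qed.

End PeriodicExtension.

Section FrozenBlocks.
Variables (R : realType) (C p ell : R) (N : nat) (o L : nat -> R).
Hypotheses (C_gt0 : 0 < C) (p_gt0 : 0 < p) (ell_gt0 : 0 < ell) (N_gt0 : (0 < N)%N)
  (L_ge0 : forall k : nat, (k < N)%N -> 0 <= L k)
  (inner_gap : forall k : nat, (k.+1 < N)%N -> o k + L k <= o k.+1)
  (wrap_gap : o N.-1 + L N.-1 <= o 0%N + p).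

Local Notation os := (oZ N p o).
Local Notation Ls := (LZ N L).
Local Notation Gs := (LG N p o L ell C).
Local Notation frozen := (GBset N p o L ell C `|` STset N p o L).

Definition block_start (k : int) : R := os k - Gs k.
Definition block_end (k : int) : R := os k + Ls k.
Definition frozen_block (k : int) : set R :=
  [set x | block_start k <= x < block_end k].

(* Guard bands have nonnegative length, since the windows do not overlap. *)
Lemma LG_ge0 k : 0 <= Gs k.
Proof.
rewrite /LG le_min divr_ge0 ?(ltW ell_gt0) ?(ltW C_gt0) //=.
by have := window_gap N_gt0 inner_gap wrap_gap (k - 1); rewrite subrK subr_ge0 addrC.
Qed.

Lemma block_start_le_end k : block_start k <= block_end k.
Proof.
by rewrite /block_start /block_end; have := LG_ge0 k; have := LZ_ge0 N_gt0 L_ge0 k; lra.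
Qed.

(* The guard band of window k + 1 lies in the gap after window k. *)
Lemma block_end_le_next k : block_end k <= block_start (k + 1).
Proof.
have G_le_gap : Gs (k + 1) <= os (k + 1) - (os (k + 1 - 1) + Ls (k + 1 - 1)).
  by rewrite /LG ge_min lexx orbT.
by rewrite addrK in G_le_gap; rewrite /block_start /block_end; lra.
Qed.

Lemma block_end_le_start k l : k < l -> block_end k <= block_start l.
Proof.
move=> kl; have -> : l = k + (absz (l - k - 1)%R).+1%:Z by lia.
elim: (absz _) => [|n IH]; first exact: block_end_le_next.
apply: le_trans IH (le_trans (block_start_le_end _) _).
have -> : k + n.+2%:Z = k + n.+1%:Z + 1 by lia.
exact: block_end_le_next.
Qed.

Lemma block_start_mono k l : k <= l -> block_start k <= block_start l.
Proof.
rewrite le_eqVlt => /orP[/eqP -> //|kl].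
exact: le_trans (block_start_le_end k) (block_end_le_start kl).
Qed.

Lemma block_end_mono k l : k <= l -> block_end k <= block_end l.
Proof.
rewrite le_eqVlt => /orP[/eqP -> //|kl].
exact: le_trans (block_end_le_start kl) (block_start_le_end l).
Qed.

Lemma block_start_shift k m : block_start (k + m * N%:Z) = block_start k + m%:~R * p.
Proof. by rewrite /block_start oZ_shift // LG_shift //; lra. Qed.

Lemma block_end_shift k m : block_end (k + m * N%:Z) = block_end k + m%:~R * p.
Proof. by rewrite /block_end oZ_shift // LZ_shift //; lra. Qed.

Lemma frozen_blocks : frozen = \bigcup_k frozen_block k.
Proof.
apply/seteqP; split => x.
- case=> -[k /andP[lo hi]]; exists k => //; apply/andP; rewrite /block_start /block_end.
    by have := LZ_ge0 N_gt0 L_ge0 k; split; lra.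
  by have := LG_ge0 k; split; lra.
- move=> [k _ /andP[lo hi]]; have [xo|ox] := ltP x (os k).
    by left; exists k; apply/andP.
  by right; exists k; apply/andP.
Qed.

Lemma frozen_measurable : measurable frozen.
Proof.
rewrite frozen_blocks; apply: countable_bigcupT_measurable => [|k].
  exact: countableP.
exact: measurable_itv_co.
Qed.


Local Notation window c t := [set x : R | (c <= x <= c + t)%R].

Lemma block_window_measure k c t :
  (lebesgue_measure (frozen_block k `&` window c t)
   <= (if block_start k - c < t then Ls k + Gs k else 0)%:E)%E.
Proof.
have mBW : measurable (frozen_block k `&` window c t).
  by apply: measurableI; [exact: measurable_itv_co | exact: measurable_itv_cc].
case: ifP => [_|late].
  have mB : measurable (frozen_block k) by exact: measurable_itv_co.
  apply: (@le_trans _ _ (lebesgue_measure (frozen_block k))).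
    by apply: le_measure; rewrite ?inE //; exact: subIsetl.
  by rewrite lebesgue_itv_co ?block_start_le_end // lee_fin /block_end /block_start; lra.
apply: (@le_trans _ _ (lebesgue_measure [set x : R | block_start k <= x <= c + t])).
  apply: le_measure; rewrite ?inE //; first exact: measurable_itv_cc.
  by move=> x [/andP[ax _] /andP[_ xt]]; apply/andP.
by rewrite lebesgue_itv_cc_degenerate //; move/negbT: late; rewrite -leNgt; lra.
Qed.

(* Moving a window starting at s in [e_(i-1), e_i] to the start a_i of block i
   does not decrease the frozen measure it sees: either it slides right over the
   frozen-free gap [e_(i-1), a_i), or left over the frozen stretch [a_i, s). *)
Lemma frozen_window_le_block_window s t i : 0 <= t ->
  block_end (i - 1) <= s <= block_end i ->
  (lebesgue_measure (frozen `&` window s t)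
   <= lebesgue_measure (frozen `&` window (block_start i) t))%E.
Proof.
move=> t_ge0 /andP[s_ge s_le]; have [s_a|a_s] := leP s (block_start i).
  apply: le_measure; rewrite ?inE.
  - by apply: measurableI; [exact: frozen_measurable | exact: measurable_itv_cc].
  - by apply: measurableI; [exact: frozen_measurable | exact: measurable_itv_cc].
  move=> x [Fx /andP[sx xt]]; split => //; apply/andP; split; last lra.
  move: Fx; rewrite frozen_blocks => -[k _ /andP[ax xe]].
  have ik : i <= k.
    rewrite leNgt; apply/negP => ki.
    have : block_end k <= block_end (i - 1) by apply: block_end_mono; lia.
    lra.
  exact: le_trans (block_start_mono ik) ax.
apply: window_slide_covered => //; first exact: frozen_measurable; first exact: ltW.
move=> x /andP[ax xs]; rewrite frozen_blocks; exists i => //; apply/andP; lra.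
Qed.

Lemma block_window_cover i M t :
  block_start i + t < block_start (i + M%:Z) ->
  frozen `&` window (block_start i) t
  `<=` \big[setU/set0]_(n < M) (frozen_block (i + n%:Z) `&` window (block_start i) t).
Proof.
move=> a_iM x [Fx /andP[ax xt]].
rewrite -(bigcup_mkord M (fun n => frozen_block (i + n%:Z) `&` window (block_start i) t)).
move: Fx; rewrite frozen_blocks => -[k _ /andP[akx xek]].
have ik : i <= k.
  rewrite leNgt; apply/negP => /block_end_le_start; lra.
have kM : k < i + M%:Z.
  rewrite ltNge; apply/negP => /block_start_mono; lra.
exists (absz (k - i)); first by rewrite /=; lia.
have -> : i + (absz (k - i))%:Z = k by lia.
by split; apply/andP.
Qed.

Lemma frozen_window_sum s t i M : 0 <= t ->
  block_end (i - 1) <= s <= block_end i ->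
  block_start i + t < block_start (i + M%:Z) ->
  (lebesgue_measure (frozen `&` window s t)
   <= (\sum_(n < M) (if block_start (i + n%:Z) - block_start i < t
                     then Ls (i + n%:Z) + Gs (i + n%:Z) else 0))%:E)%E.
Proof.
move=> t_ge0 s_in a_iM.
apply: le_trans (frozen_window_le_block_window t_ge0 s_in) _.
rewrite -sumEFin.
pose F n := frozen_block (i + n%:Z) `&` window (block_start i) t.
apply: (le_trans (content_subadditive lebesgue_measure (F := F) _ _ (block_window_cover a_iM))).
- by move=> n _; apply: measurableI; [exact: measurable_itv_co | exact: measurable_itv_cc].
- by apply: measurableI; [exact: frozen_measurable | exact: measurable_itv_cc].
by apply: lee_sum => n _; exact: block_window_measure.
Qed.

(* The j-th term of alpha_GBST, read off from any index i = j + q N of the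
   periodic schedule: block i + r has length L + L^G and starts
   a_(i+r) - a_i after block i. *)
Lemma alpha_term_blocks t (j : nat) (q : int) :
  alpha_term N p o L ell C t j =
  C * \sum_(r <- iota 0 N)
        (Ls (j%:Z + q * N%:Z + r%:Z) + Gs (j%:Z + q * N%:Z + r%:Z)) *
        (Num.ceil ((t - (block_start (j%:Z + q * N%:Z + r%:Z)
                         - block_start (j%:Z + q * N%:Z))) / p))%:~R.
Proof.
rewrite /alpha_term -[in iota j N](addn0 j) iotaDl big_map mulr_sumr.
apply: eq_bigr => r _.
have -> : j%:Z + q * N%:Z + r%:Z = (j + r)%N%:Z + q * N%:Z by lia.
rewrite LZ_shift // LG_shift // !block_start_shift /block_start /orel.
rewrite mulrA [C * _]mulrC; congr (_ * _%:~R); congr (Num.ceil (_ / _)); lra.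
Qed.

Lemma frozen_window_le_alpha_term s t : 0 <= t ->
  exists2 j, (j < N)%N &
  (C%:E * lebesgue_measure (frozen `&` window s t)
   <= (alpha_term N p o L ell C t j)%:E)%E.
Proof.
move=> t_ge0.
have [i /andP[s_ge s_lt]] := periodic_bracket p_gt0 block_end_shift s.
have [Q a_iM] := periodic_exceeds p_gt0 block_start_shift i (block_start i + t).
have [q [j jN i_eq]] := int_divmod N_gt0 i; rewrite addrC in i_eq.
exists j => //; rewrite (alpha_term_blocks t j q) -i_eq.
have s_in : block_end (i - 1) <= s <= block_end i by rewrite s_ge ltW.
pose x n := block_start (i + n%:Z) - block_start i.
pose l n := Ls (i + n%:Z) + Gs (i + n%:Z).
have count : \sum_(n <- iota 0 (Q * N)) (if x n < t then l n else 0)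
    <= \sum_(r <- iota 0 N) l r * (Num.ceil ((t - x r) / p))%:~R.
  apply: periodic_count_bound => // [n|n|n|n|n nN l_gt0].
  - by rewrite subr_ge0 block_start_mono //; lia.
  - rewrite /x (_ : i + (N + n)%N%:Z = i + n%:Z + 1 * N%:Z); last by lia.
    by rewrite block_start_shift mul1r; lra.
  - rewrite /l (_ : i + (N + n)%N%:Z = i + n%:Z + 1 * N%:Z); last by lia.
    by rewrite LZ_shift // LG_shift.
  - by rewrite addr_ge0 ?LG_ge0 // (LZ_ge0 N_gt0 L_ge0).
  - have : block_end (i + n%:Z) <= block_start (i + 1 * N%:Z).
      by apply: block_end_le_start; lia.
    by rewrite block_start_shift mul1r /x /block_end /block_start; move: l_gt0; rewrite /l; lra.
apply: le_trans (lee_wpmul2l _ (frozen_window_sum t_ge0 s_in a_iM)) _.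
  by rewrite lee_fin ltW.
rewrite -EFinM lee_fin ler_pM2l // -(big_mkord xpredT (fun n => if x n < t then l n else 0)).
by rewrite /index_iota subn0; exact: count.
Qed.

End FrozenBlocks.

Theorem lemma2 (R : realType) (C p ell : R) (N : nat) (o L : nat -> R)
  (HC : 0 < C) (Hp : 0 < p) (Hell : 0 < ell) (HN : (1 <= N)%N)
  (Ho0 : 0 <= o 0%N) (HoN : o N.-1 < p)
  (Hinc : forall k : nat, (k.+1 < N)%N -> o k < o k.+1)
  (HL0 : forall k : nat, (k < N)%N -> 0 <= L k)
  (Hgap : forall k : nat, (k.+1 < N)%N -> o k + L k <= o k.+1)
  (Hlast : o N.-1 + L N.-1 <= o 0%N + p) :
  forall s t : R, 0 <= t ->
    (C%:E * lebesgue_measure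
       ((GBset N p o L ell C `|` STset N p o L) `&` [set x : R | (s <= x <= s + t)%R])
     <= (alpha_GBST N p o L ell C t)%:E)%E.
Proof.
move=> s t t_ge0.
have [j jN window_le] := frozen_window_le_alpha_term HC Hp Hell HN HL0 Hgap Hlast s t_ge0.
apply: le_trans window_le _; rewrite lee_fin.
exact: (le_bigmax _ (fun k : 'I_N => alpha_term N p o L ell C t k) (Ordinal jN)).
Qed.
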